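(* Let $X$ be a real Banach space and let $E\subset X$ be a weakly compact set having no vector of maximum length (no $e\in E$ with $\|e\|=\sup\{\|e'\|:e'\in E\}$). Then the norm-closed convex hull $\overline{\mathrm{co}}(E)$ has no vector of maximum length. In particular, if $X$ fails the Schur property and $(x_n)_{n\ge1}$ is a sequence of unit vectors in $X$ converging weakly to $0$, then $$K=\overline{\mathrm{co}}\left(\left\{\tfrac{n}{n+1}x_n : n\in\mathbb{N}\right\}\cup\{0\}\right)$$ is a closed bounded convex set that is not remotal from $0$.
   Context: $\overline{\mathrm{co}}(E)$ denotes the norm-closed convex hull of $E$. A Banach space has the Schur property if every weakly convergent sequence is norm convergent. For a bounded set $E$ in a Banach space $Z$ and $z\in Z$, let $D(z,E)=\sup\{\|z-e\|: e\in E\}$; $E$ is remotal from $z$ if there exists $e_0\in E$ with $\|z-e_0\|=D(z,E)$. *)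

From Stdlib Require Import Reals List.
Open Scope R_scope.

Record NormedSpace := {
  ns_car :> Type;
  ns_zero : ns_car;
  ns_add : ns_car -> ns_car -> ns_car;
  ns_opp : ns_car -> ns_car;
  ns_scal : R -> ns_car -> ns_car;
  ns_norm : ns_car -> R;
  ns_add_assoc : forall x y z, ns_add x (ns_add y z) = ns_add (ns_add x y) z;
  ns_add_comm : forall x y, ns_add x y = ns_add y x;
  ns_add_zero : forall x, ns_add ns_zero x = x;
  ns_add_opp : forall x, ns_add x (ns_opp x) = ns_zero;
  ns_scal_assoc : forall a b x, ns_scal a (ns_scal b x) = ns_scal (a * b) x;
  ns_scal_one : forall x, ns_scal 1 x = x;
  ns_scal_distr_l : forall a x y, ns_scal a (ns_add x y) = ns_add (ns_scal a x) (ns_scal a y);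
  ns_scal_distr_r : forall a b x, ns_scal (a + b) x = ns_add (ns_scal a x) (ns_scal b x);
  ns_norm_eq0 : forall x, ns_norm x = 0 -> x = ns_zero;
  ns_norm_scal : forall a x, ns_norm (ns_scal a x) = Rabs a * ns_norm x;
  ns_norm_triangle : forall x y, ns_norm (ns_add x y) <= ns_norm x + ns_norm y
}.

Arguments ns_zero {_}.
Arguments ns_add {_}.
Arguments ns_opp {_}.
Arguments ns_scal {_}.
Arguments ns_norm {_}.

Section Defs.
Variable X : NormedSpace.

Definition ns_sub (x y : X) : X := ns_add x (ns_opp y).

Definition norm_cv (u : nat -> X) (l : X) : Prop :=
  forall eps, eps > 0 -> exists N, forall n, (n >= N)%nat -> ns_norm (ns_sub (u n) l) < eps.

Definition norm_cauchy (u : nat -> X) : Prop :=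
  forall eps, eps > 0 -> exists N, forall n m, (n >= N)%nat -> (m >= N)%nat ->
    ns_norm (ns_sub (u n) (u m)) < eps.

Definition banach : Prop :=
  forall u, norm_cauchy u -> exists l, norm_cv u l.

Definition is_clf (f : X -> R) : Prop :=
  (forall x y, f (ns_add x y) = f x + f y) /\
  (forall a x, f (ns_scal a x) = a * f x) /\
  (exists C, forall x, Rabs (f x) <= C * ns_norm x).

Definition weak_open (U : X -> Prop) : Prop :=
  forall x, U x -> exists (fs : list (X -> R)) (eps : R),
    eps > 0 /\ Forall is_clf fs /\
    forall y, Forall (fun f => Rabs (f y - f x) < eps) fs -> U y.

Definition weakly_compact (E : X -> Prop) : Prop :=
  forall (I : Type) (U : I -> X -> Prop),
    (forall i, weak_open (U i)) ->
    (forall x, E x -> exists i, U i x) ->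
    exists l : list I, forall x, E x -> exists i, In i l /\ U i x.

Definition weak_cv (u : nat -> X) (l : X) : Prop :=
  forall f, is_clf f -> Un_cv (fun n => f (u n)) (f l).

Definition schur : Prop :=
  forall (u : nat -> X) (l : X), weak_cv u l -> exists l', norm_cv u l'.

Definition ns_convex (C : X -> Prop) : Prop :=
  forall x y t, C x -> C y -> 0 <= t <= 1 ->
    C (ns_add (ns_scal t x) (ns_scal (1 - t) y)).

Definition norm_closed (C : X -> Prop) : Prop :=
  forall x, (forall eps, eps > 0 -> exists y, C y /\ ns_norm (ns_sub x y) < eps) -> C x.

Definition ns_bounded (C : X -> Prop) : Prop :=
  exists M, forall x, C x -> ns_norm x <= M.

Definition closed_convex_hull (E : X -> Prop) : X -> Prop :=
  fun x => forall C, ns_convex C -> norm_closed C -> (forall e, E e -> C e) -> C x.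

Definition has_max_length (E : X -> Prop) : Prop :=
  exists e, E e /\ is_lub (fun r => exists e', E e' /\ r = ns_norm e') (ns_norm e).

Definition remotal (z : X) (E : X -> Prop) : Prop :=
  exists e0, E e0 /\ is_lub (fun r => exists e, E e /\ r = ns_norm (ns_sub z e)) (ns_norm (ns_sub z e0)).

End Defs.

Arguments ns_sub {_}.

(* Suppose x in the closed convex hull of a weakly compact E had maximum
   length.  By Hahn-Banach some functional f of norm at most one satisfies
   f(x) = |x|.  If f < |x| on E, weak compactness gives a uniform gap
   f <= |x| - delta on E; that closed half-space then contains the hull, hence
   x, which is absurd.  So f(e) >= |x| for some e in E, and |e| >= f(e) >= |x|
   makes e a vector of maximum length in E. *)

From Stdlib Require Import Reals Lra Lia List Classical ClassicalEpsilon.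
From mathcomp Require classical_sets boolp.
Open Scope R_scope.

Section VectorAlgebra.
Variable X : NormedSpace.
Implicit Types x y z : X.

Lemma add_zero_r x : ns_add x ns_zero = x.
Proof. rewrite ns_add_comm; apply ns_add_zero. Qed.

Lemma add_cancel_l x y z : ns_add x y = ns_add x z -> y = z.
Proof.
  intros H.
  assert (H2 : ns_add (ns_opp x) (ns_add x y) = ns_add (ns_opp x) (ns_add x z)) by now rewrite H.
  rewrite !ns_add_assoc, (ns_add_comm _ (ns_opp x) x), ns_add_opp, !ns_add_zero in H2.
  exact H2.
Qed.

Lemma scal0 x : ns_scal 0 x = ns_zero.
Proof.
  apply (add_cancel_l (ns_scal 0 x)).
  rewrite add_zero_r, <- ns_scal_distr_r, Rplus_0_r. reflexivity.
Qed.

Lemma scal_zero a : ns_scal a (@ns_zero X) = ns_zero.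
Proof. rewrite <- (scal0 ns_zero), ns_scal_assoc, Rmult_0_r. reflexivity. Qed.

Definition neg y : X := ns_scal (-1) y.

Lemma opp_neg x : ns_opp x = neg x.
Proof.
  apply (add_cancel_l x). rewrite ns_add_opp. unfold neg.
  rewrite <- (ns_scal_one _ x) at 1. rewrite <- ns_scal_distr_r.
  replace (1 + -1) with 0 by ring. now rewrite scal0.
Qed.

Lemma add_neg x : ns_add x (neg x) = ns_zero.
Proof. rewrite <- opp_neg; apply ns_add_opp. Qed.

Lemma neg_add y z : neg (ns_add y z) = ns_add (neg y) (neg z).
Proof. apply ns_scal_distr_l. Qed.

Lemma add_neg_cancel y w : ns_add (ns_add y w) (neg y) = w.
Proof.
  rewrite (ns_add_comm _ y w), <- ns_add_assoc, add_neg. apply add_zero_r.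
Qed.

Lemma add_swap (a b c d : X) : ns_add (ns_add a b) (ns_add c d) = ns_add (ns_add a c) (ns_add b d).
Proof.
  rewrite !ns_add_assoc. f_equal. rewrite <- !ns_add_assoc. f_equal. apply ns_add_comm.
Qed.

Lemma sub_decomp x y : x = ns_add y (ns_sub x y).
Proof.
  unfold ns_sub. rewrite ns_add_comm, <- ns_add_assoc, (ns_add_comm _ (ns_opp y) y), ns_add_opp.
  now rewrite add_zero_r.
Qed.

Lemma norm_zero : ns_norm (@ns_zero X) = 0.
Proof. rewrite <- (scal0 ns_zero), ns_norm_scal, Rabs_R0. ring. Qed.

Lemma norm_neg x : ns_norm (neg x) = ns_norm x.
Proof. unfold neg. rewrite ns_norm_scal, Rabs_left by lra. ring. Qed.

Lemma norm_zero_sub x : ns_norm (ns_sub ns_zero x) = ns_norm x.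
Proof. unfold ns_sub. rewrite ns_add_zero, opp_neg. apply norm_neg. Qed.

End VectorAlgebra.

Arguments neg {X}.

Definition is_glbR (A : R -> Prop) (m : R) : Prop :=
  (forall r, A r -> m <= r) /\ (forall m', (forall r, A r -> m' <= r) -> m' <= m).

Definition infR (A : R -> Prop) : R :=
  match excluded_middle_informative (exists m, is_glbR A m) with
  | left H => proj1_sig (constructive_indefinite_description _ H)
  | right _ => 0
  end.

Lemma glb_exists (A : R -> Prop) :
  (exists r, A r) -> (exists b, forall r, A r -> b <= r) -> exists m, is_glbR A m.
Proof.
  intros [r Hr] [b Hb].
  destruct (completeness (fun x => A (- x))) as [m [Hub Hleast]].
  - exists (- b). intros x Hx. specialize (Hb _ Hx). lra.
  - exists (- r). now rewrite Ropp_involutive.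
  - exists (- m). split.
    + intros s Hs. assert (- s <= m) by (apply Hub; cbv beta; now rewrite Ropp_involutive). lra.
    + intros m' Hm'. assert (m <= - m') by (apply Hleast; intros x Hx; specialize (Hm' _ Hx); lra).
      lra.
Qed.

Lemma infR_spec (A : R -> Prop) :
  (exists r, A r) -> (exists b, forall r, A r -> b <= r) -> is_glbR A (infR A).
Proof.
  intros Hne Hbd. unfold infR.
  destruct excluded_middle_informative as [H|H].
  - exact (proj2_sig (constructive_indefinite_description _ H)).
  - exfalso. exact (H (glb_exists A Hne Hbd)).
Qed.

Lemma glb_add (A1 A2 : R -> Prop) m m1 m2 :
  is_glbR A1 m1 -> is_glbR A2 m2 ->
  (forall r1 r2, A1 r1 -> A2 r2 -> m <= r1 + r2) -> m <= m1 + m2.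
Proof.
  intros [_ G1] [_ G2] H.
  assert (H1 : forall r2, A2 r2 -> m - r2 <= m1).
  { intros r2 Hr2. apply G1. intros r1 Hr1. specialize (H r1 r2 Hr1 Hr2). lra. }
  assert (m - m1 <= m2) by (apply G2; intros r2 Hr2; specialize (H1 r2 Hr2); lra).
  lra.
Qed.

Lemma glb_scale (A1 A2 : R -> Prop) a m1 m2 : 0 < a ->
  is_glbR A1 m1 -> is_glbR A2 m2 ->
  (forall r, A1 r -> A2 (a * r)) -> (forall r, A2 r -> A1 (r / a)) -> m2 = a * m1.
Proof.
  intros Ha [L1 G1] [L2 G2] H12 H21.
  assert (a * m1 <= m2).
  { apply G2. intros r Hr. specialize (L1 _ (H21 r Hr)).
    apply (Rmult_le_compat_l a) in L1; [|lra].
    replace (a * (r / a)) with r in L1 by (field; lra). exact L1. }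
  assert (m2 / a <= m1).
  { apply G1. intros r Hr. specialize (L2 _ (H12 r Hr)).
    apply (Rmult_le_compat_l (/ a)) in L2; [|left; apply Rinv_0_lt_compat; lra].
    replace (/ a * (a * r)) with r in L2 by (field; lra).
    unfold Rdiv. rewrite Rmult_comm. exact L2. }
  apply (Rmult_le_compat_l a) in H0; [|lra].
  replace (a * (m2 / a)) with m2 in H0 by (field; lra). lra.
Qed.

Section Sublinear.
Variable X : NormedSpace.
Implicit Types y z : X.

Definition sublinear (p : X -> R) : Prop :=
  (forall y z, p (ns_add y z) <= p y + p z) /\
  (forall a y, 0 < a -> p (ns_scal a y) = a * p y).

Lemma norm_sublinear : sublinear (@ns_norm X).
Proof.
  split; [apply ns_norm_triangle|].
  intros a y Ha. rewrite ns_norm_scal, Rabs_right by lra. reflexivity.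
Qed.

Lemma sublinear_zero p : sublinear p -> p ns_zero = 0.
Proof.
  intros [_ Hom]. pose proof (Hom 2 ns_zero ltac:(lra)) as H2.
  rewrite scal_zero in H2. lra.
Qed.

Lemma sublinear_homog p t y : sublinear p -> 0 <= t -> p (ns_scal t y) = t * p y.
Proof.
  intros Hp [Ht| <-]; [now apply Hp|].
  rewrite scal0, sublinear_zero by exact Hp. ring.
Qed.

Lemma sublinear_neg p y : sublinear p -> 0 <= p y + p (neg y).
Proof.
  intros Hp. pose proof (proj1 Hp y (neg y)) as H.
  rewrite add_neg, sublinear_zero in H by exact Hp. exact H.
Qed.

Lemma odd_sublinear_clf p :
  sublinear p -> (forall z, p (neg z) = - p z) -> (forall y, p y <= ns_norm y) ->
  is_clf X p /\ forall y, Rabs (p y) <= ns_norm y.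
Proof.
  intros Hp Hodd Hle.
  assert (Hbound : forall y, Rabs (p y) <= ns_norm y).
  { intros y. apply Rabs_le. pose proof (Hle (neg y)) as H.
    rewrite Hodd, norm_neg in H. split; [lra|apply Hle]. }
  split; [split; [|split]|exact Hbound].
  - intros a b. apply Rle_antisym; [apply Hp|].
    pose proof (proj1 Hp (neg a) (neg b)) as H.
    rewrite <- neg_add, !Hodd in H. lra.
  - intros a y. destruct (Rtotal_order a 0) as [Ha|[->|Ha]].
    + replace (ns_scal a y) with (ns_scal (- a) (neg y)).
      * rewrite (proj2 Hp), Hodd by lra. ring.
      * unfold neg. rewrite ns_scal_assoc. f_equal. ring.
    + rewrite scal0, sublinear_zero by exact Hp. ring.
    + now apply Hp.
  - exists 1. intros y. rewrite Rmult_1_l. apply Hbound.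
Qed.

Definition shrink_values (p : X -> R) z y : R -> Prop :=
  fun r => exists t, 0 <= t /\ r = p (ns_add y (ns_scal t z)) - t * p z.

Definition shrink (p : X -> R) z y : R := infR (shrink_values p z y).

Lemma shrink_glb p z y : sublinear p -> is_glbR (shrink_values p z y) (shrink p z y).
Proof.
  intros Hp. apply infR_spec.
  - exists (p (ns_add y (ns_scal 0 z)) - 0 * p z). exists 0. split; [lra|reflexivity].
  - exists (- p (neg y)). intros r [t [Ht ->]].
    pose proof (proj1 Hp (ns_add y (ns_scal t z)) (neg y)) as H.
    rewrite add_neg_cancel, sublinear_homog in H by assumption. lra.
Qed.

Lemma shrink_le p z y : sublinear p -> shrink p z y <= p y.
Proof.
  intros Hp. apply (shrink_glb p z y Hp). exists 0.
  split; [lra|]. rewrite scal0, add_zero_r. ring.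
Qed.

Lemma shrink_neg p z : sublinear p -> shrink p z (neg z) <= - p z.
Proof.
  intros Hp. replace (- p z) with (p (ns_add (neg z) (ns_scal 1 z)) - 1 * p z).
  - apply (shrink_glb p z (neg z) Hp). exists 1. split; [lra|reflexivity].
  - rewrite ns_scal_one, ns_add_comm, add_neg, sublinear_zero by exact Hp. ring.
Qed.

Lemma shrink_sublinear p z : sublinear p -> sublinear (shrink p z).
Proof.
  intros Hp. split.
  - intros y1 y2.
    apply (glb_add _ _ _ _ _ (shrink_glb p z y1 Hp) (shrink_glb p z y2 Hp)).
    intros r1 r2 [t1 [Ht1 ->]] [t2 [Ht2 ->]].
    apply Rle_trans with (p (ns_add (ns_add y1 y2) (ns_scal (t1 + t2) z)) - (t1 + t2) * p z).
    + apply (shrink_glb p z _ Hp). exists (t1 + t2). split; [lra|reflexivity].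
    + rewrite ns_scal_distr_r, add_swap.
      pose proof (proj1 Hp (ns_add y1 (ns_scal t1 z)) (ns_add y2 (ns_scal t2 z))). lra.
  - intros a y Ha.
    assert (Hsplit : forall s, ns_scal a (ns_add y (ns_scal s z))
                               = ns_add (ns_scal a y) (ns_scal (a * s) z)).
    { intros s. now rewrite ns_scal_distr_l, ns_scal_assoc. }
    apply (glb_scale _ _ a _ _ Ha (shrink_glb p z y Hp) (shrink_glb p z _ Hp)).
    + intros r [t [Ht ->]]. exists (a * t). split; [nra|].
      rewrite <- Hsplit, (proj2 Hp) by exact Ha. ring.
    + intros r [t [Ht ->]]. exists (t / a).
      split; [apply Rle_mult_inv_pos; lra|].
      replace (ns_add (ns_scal a y) (ns_scal t z)) with (ns_scal a (ns_add y (ns_scal (t / a) z))).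
      * rewrite (proj2 Hp) by exact Ha. field. lra.
      * rewrite Hsplit. do 3 f_equal. field. lra.
Qed.

Lemma minimal_sublinear_odd p :
  sublinear p ->
  (forall q, sublinear q -> (forall y, q y <= p y) -> forall y, p y <= q y) ->
  forall z, p (neg z) = - p z.
Proof.
  intros Hp Hmin z.
  assert (Hle : p (neg z) <= shrink p z (neg z))
    by (apply Hmin; [now apply shrink_sublinear|intros y; now apply shrink_le]).
  pose proof (shrink_neg p z Hp). pose proof (sublinear_neg p z Hp). lra.
Qed.

Section ChainInfimum.
Variables (p0 : X -> R) (I : Type) (A : I -> Prop) (q : I -> X -> R).
Hypothesis p0_sub : sublinear p0.
Hypothesis q_sub : forall i, A i -> sublinear (q i).
Hypothesis q_le : forall i, A i -> forall y, q i y <= p0 y.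
Hypothesis q_chain :
  forall i j, A i -> A j -> (forall y, q j y <= q i y) \/ (forall y, q i y <= q j y).

Definition chain_member (g : X -> R) : Prop := g = p0 \/ exists i, A i /\ g = q i.

Definition chain_inf y : R := infR (fun r => exists g, chain_member g /\ r = g y).

Lemma chain_member_sub g : chain_member g -> sublinear g /\ forall y, g y <= p0 y.
Proof.
  intros [->|[i [Hi ->]]].
  - split; [exact p0_sub|intros y; lra].
  - split; [now apply q_sub|now apply q_le].
Qed.

Lemma chain_member_common g1 g2 :
  chain_member g1 -> chain_member g2 ->
  exists g, chain_member g /\ (forall y, g y <= g1 y) /\ (forall y, g y <= g2 y).
Proof.
  intros M1 M2.
  pose proof (proj2 (chain_member_sub g1 M1)) as L1.
  pose proof (proj2 (chain_member_sub g2 M2)) as L2.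
  destruct M1 as [->|[i [Hi ->]]]; destruct M2 as [->|[j [Hj ->]]].
  - exists p0. split; [now left|split; intros y; lra].
  - exists (q j). split; [right; eauto|split; [exact L2|intros y; lra]].
  - exists (q i). split; [right; eauto|split; [intros y; lra|exact L1]].
  - destruct (q_chain i j Hi Hj) as [H|H].
    + exists (q j). split; [right; eauto|split; [exact H|intros y; lra]].
    + exists (q i). split; [right; eauto|split; [intros y; lra|exact H]].
Qed.

Lemma chain_inf_glb y : is_glbR (fun r => exists g, chain_member g /\ r = g y) (chain_inf y).
Proof.
  apply infR_spec.
  - exists (p0 y), p0. split; [now left|reflexivity].
  - exists (- p0 (neg y)). intros r [g [Mg ->]].
    destruct (chain_member_sub g Mg) as [Sg Lg].
    pose proof (sublinear_neg g y Sg). pose proof (Lg (neg y)). lra.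
Qed.

Lemma chain_inf_below g : chain_member g -> forall y, chain_inf y <= g y.
Proof. intros Mg y. apply (chain_inf_glb y). eauto. Qed.

Lemma chain_inf_sublinear : sublinear chain_inf.
Proof.
  split.
  - intros y1 y2. apply (glb_add _ _ _ _ _ (chain_inf_glb y1) (chain_inf_glb y2)).
    intros r1 r2 [g1 [M1 ->]] [g2 [M2 ->]].
    destruct (chain_member_common g1 g2 M1 M2) as [g [Mg [L1 L2]]].
    apply Rle_trans with (g (ns_add y1 y2)); [now apply chain_inf_below|].
    pose proof (proj1 (proj1 (chain_member_sub g Mg)) y1 y2).
    pose proof (L1 y1). pose proof (L2 y2). lra.
  - intros a y Ha. apply (glb_scale _ _ a _ _ Ha (chain_inf_glb y) (chain_inf_glb _)).
    + intros r [g [Mg ->]]. exists g. split; [exact Mg|].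
      symmetry. apply (proj1 (chain_member_sub g Mg)). exact Ha.
    + intros r [g [Mg ->]]. exists g. split; [exact Mg|].
      rewrite (proj2 (proj1 (chain_member_sub g Mg))) by exact Ha. field. lra.
Qed.

End ChainInfimum.

Lemma minimal_sublinear_below p0 :
  sublinear p0 ->
  exists p, sublinear p /\ (forall y, p y <= p0 y) /\
    (forall q, sublinear q -> (forall y, q y <= p y) -> forall y, p y <= q y).
Proof.
  intros Hp0.
  set (T := {p : X -> R | sublinear p /\ forall y, p y <= p0 y}).
  set (below := fun a b : T => boolp.asbool (forall y, proj1_sig b y <= proj1_sig a y)).
  assert (t0 : T) by (exists p0; split; [exact Hp0|intros y; lra]).
  destruct (classical_sets.ZL_preorder t0 (R := below)) as [[p [Hp Hle]] Hmax].
  - intros a. unfold below. rewrite boolp.asboolE. intros y; lra.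
  - intros a b c. unfold below. rewrite !boolp.asboolE. intros Hab Hbc y.
    specialize (Hab y). specialize (Hbc y). lra.
  - intros Ch Htot.
    assert (Hsub : forall a : T, Ch a -> sublinear (proj1_sig a)) by (intros a _; apply (proj2_sig a)).
    assert (Hle : forall a : T, Ch a -> forall y, proj1_sig a y <= p0 y) by (intros a _; apply (proj2_sig a)).
    assert (Hch : forall a b : T, Ch a -> Ch b ->
              (forall y, proj1_sig b y <= proj1_sig a y) \/ (forall y, proj1_sig a y <= proj1_sig b y)).
    { intros a b Ha Hb. destruct (Htot a b Ha Hb) as [H|H]; unfold below in H;
        rewrite boolp.asboolE in H; auto. }
    set (inf := chain_inf p0 T Ch (@proj1_sig _ _)).
    assert (Dinf : sublinear inf /\ forall y, inf y <= p0 y).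
    { split; [now apply chain_inf_sublinear|].
      intros y. apply chain_inf_below; auto. now left. }
    exists (exist _ inf Dinf). intros a Ha. unfold below. rewrite boolp.asboolE.
    intros y. apply chain_inf_below; auto. right. eauto.
  - exists p. split; [exact Hp|split; [exact Hle|]].
    intros q Hq Hqp.
    assert (Dq : sublinear q /\ forall y, q y <= p0 y)
      by (split; [exact Hq|intros y; pose proof (Hqp y); pose proof (Hle y); lra]).
    specialize (Hmax (exist _ q Dq)). unfold below in Hmax. simpl in Hmax.
    rewrite !boolp.asboolE in Hmax. exact (Hmax Hqp).
Qed.

Theorem norming_functional (x0 : X) :
  exists f, is_clf X f /\ (forall y, Rabs (f y) <= ns_norm y) /\ f x0 = ns_norm x0.
Proof.
  set (p0 := shrink (@ns_norm X) x0).
  assert (Hp0 : sublinear p0) by (apply shrink_sublinear, norm_sublinear).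
  destruct (minimal_sublinear_below p0 Hp0) as [p [Hp [Hle Hmin]]].
  assert (Hodd := minimal_sublinear_odd p Hp Hmin).
  assert (Hnorm : forall y, p y <= ns_norm y).
  { intros y. pose proof (Hle y). pose proof (shrink_le _ x0 y norm_sublinear). unfold p0 in *. lra. }
  destruct (odd_sublinear_clf p Hp Hodd Hnorm) as [Hclf Hbound].
  exists p. split; [exact Hclf|split; [exact Hbound|]].
  apply Rle_antisym; [apply Hnorm|].
  pose proof (Hle (neg x0)). pose proof (shrink_neg _ x0 norm_sublinear).
  rewrite Hodd in *. unfold p0 in *. lra.
Qed.

End Sublinear.

Section ClosedConvexHull.
Variable X : NormedSpace.
Implicit Types x y : X.

Lemma hull_incl (E : X -> Prop) e : E e -> closed_convex_hull X E e.
Proof. intros He C _ _ HC. now apply HC. Qed.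

Lemma hull_closed (E : X -> Prop) : norm_closed X (closed_convex_hull X E).
Proof.
  intros x Hx C Hconv Hcl HE. apply Hcl. intros eps Heps.
  destruct (Hx eps Heps) as [y [Hy Hn]]. exists y. split; [now apply Hy|exact Hn].
Qed.

Lemma hull_convex (E : X -> Prop) : ns_convex X (closed_convex_hull X E).
Proof. intros x y t Hx Hy Ht C Hconv Hcl HE. apply Hconv; [apply Hx|apply Hy|]; auto. Qed.

Lemma ball_closed r : norm_closed X (fun y => ns_norm y <= r).
Proof.
  intros x Hx. apply Rnot_lt_le. intros Hlt.
  destruct (Hx (ns_norm x - r)) as [y [Hy Hn]]; [lra|].
  pose proof (ns_norm_triangle _ y (ns_sub x y)) as H. rewrite <- sub_decomp in H. lra.
Qed.

Lemma ball_convex r : ns_convex X (fun y => ns_norm y <= r).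
Proof.
  intros x y t Hx Hy Ht. eapply Rle_trans; [apply ns_norm_triangle|].
  rewrite !ns_norm_scal, !Rabs_right by lra. nra.
Qed.

Lemma clf_sub f x y : is_clf X f -> f (ns_sub x y) = f x - f y.
Proof.
  intros [Hadd [Hscal _]]. unfold ns_sub. rewrite Hadd, opp_neg. unfold neg. rewrite Hscal. ring.
Qed.

Lemma clf_zero f : is_clf X f -> f ns_zero = 0.
Proof. intros [_ [Hscal _]]. rewrite <- (scal0 X ns_zero), Hscal. ring. Qed.

Lemma halfspace_closed f c :
  is_clf X f -> (forall y, Rabs (f y) <= ns_norm y) -> norm_closed X (fun y => f y <= c).
Proof.
  intros Hf Hb x Hx. apply Rnot_lt_le. intros Hlt.
  destruct (Hx (f x - c)) as [y [Hy Hn]]; [lra|].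
  pose proof (Rle_abs (f (ns_sub x y))). pose proof (Hb (ns_sub x y)).
  rewrite clf_sub in * by exact Hf. lra.
Qed.

Lemma halfspace_convex f c : is_clf X f -> ns_convex X (fun y => f y <= c).
Proof. intros [Hadd [Hscal _]] x y t Hx Hy Ht. rewrite Hadd, !Hscal. nra. Qed.

End ClosedConvexHull.

Section WeakCompactness.
Variable X : NormedSpace.
Implicit Types x y : X.

Lemma weak_open_sublevel f c : is_clf X f -> weak_open X (fun y => f y < c).
Proof.
  intros Hf x Hx. exists (f :: nil), (c - f x).
  split; [lra|split; [constructor; [exact Hf|constructor]|]].
  intros y Hy. inversion Hy as [|g fs Hg _]. apply Rabs_def2 in Hg. lra.
Qed.

Lemma weakly_compact_gap (E : X -> Prop) f c :
  weakly_compact X E -> is_clf X f -> (forall e, E e -> f e < c) ->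
  exists delta, 0 < delta /\ forall e, E e -> f e <= c - delta.
Proof.
  intros Hwc Hf Hlt.
  destruct (Hwc nat (fun n y => f y < c - / INR (S n))) as [l Hl].
  - intros n. now apply weak_open_sublevel.
  - intros e He. specialize (Hlt e He).
    destruct (archimed_cor1 (c - f e)) as [N [HN HN0]]; [lra|].
    exists (pred N). rewrite Nat.succ_pred_pos by exact HN0. lra.
  - exists (/ INR (S (list_max l))). split; [apply Rinv_0_lt_compat, lt_0_INR; lia|].
    intros e He. destruct (Hl e He) as [i [Hi Hfi]].
    assert (Hmax : (i <= list_max l)%nat)
      by (apply (proj1 (Forall_forall _ l) (proj1 (list_max_le l _) (Nat.le_refl _))), Hi).
    assert (/ INR (S (list_max l)) <= / INR (S i))
      by (apply Rinv_le_contravar; [apply lt_0_INR; lia|apply le_INR; lia]).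
    lra.
Qed.

Lemma weak_cv_eventually (u : nat -> X) l fs eps :
  weak_cv X u l -> eps > 0 -> Forall (is_clf X) fs ->
  exists N, forall n, (n >= N)%nat -> Forall (fun f => Rabs (f (u n) - f l) < eps) fs.
Proof.
  intros Hw Heps Hfs. induction Hfs as [|f fs Hf _ IH].
  - exists 0%nat. intros; constructor.
  - destruct IH as [N1 HN1]. destruct (Hw f Hf eps Heps) as [N2 HN2].
    exists (Nat.max N1 N2). intros n Hn.
    constructor; [apply HN2; lia|apply HN1; lia].
Qed.

Lemma weak_cv_range_compact (u : nat -> X) l (P : nat -> Prop) :
  weak_cv X u l -> weakly_compact X (fun y => (exists n, P n /\ y = u n) \/ y = l).
Proof.
  intros Hw I U Hop Hcov.
  destruct (Hcov l (or_intror eq_refl)) as [i0 Hi0].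
  destruct (Hop i0 l Hi0) as [fs [eps [Heps [Hfs HU]]]].
  destruct (weak_cv_eventually u l fs eps Hw Heps Hfs) as [N HN].
  assert (Hinit : forall M, exists l' : list I,
            forall n, (n < M)%nat -> P n -> exists i, In i l' /\ U i (u n)).
  { induction M as [|M [l' Hl']].
    - exists nil. intros; lia.
    - destruct (classic (P M)) as [HM|HM].
      + destruct (Hcov (u M) (or_introl (ex_intro _ M (conj HM eq_refl)))) as [j Hj].
        exists (j :: l'). intros n Hn Pn. destruct (Nat.eq_dec n M) as [->|Hne].
        * exists j. split; [now left|exact Hj].
        * destruct (Hl' n ltac:(lia) Pn) as [i [Hi Hu]]. exists i. split; [now right|exact Hu].
      + exists l'. intros n Hn Pn. destruct (Nat.eq_dec n M) as [->|Hne]; [contradiction|].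
        apply Hl'; [lia|exact Pn]. }
  destruct (Hinit N) as [l' Hl']. exists (i0 :: l').
  intros y [[n [Pn ->]]| ->].
  - destruct (Nat.le_gt_cases N n) as [HNn|HnN].
    + exists i0. split; [now left|]. apply HU, HN, HNn.
    + destruct (Hl' n HnN Pn) as [i [Hi Hu]]. exists i. split; [now right|exact Hu].
  - exists i0. split; [now left|exact Hi0].
Qed.

Lemma weak_cv_scale (u : nat -> X) (a : nat -> R) :
  weak_cv X u ns_zero -> (forall n, Rabs (a n) <= 1) ->
  weak_cv X (fun n => ns_scal (a n) (u n)) ns_zero.
Proof.
  intros Hw Ha f Hf eps Heps. destruct (Hw f Hf eps Heps) as [N HN].
  exists N. intros n Hn. specialize (HN n Hn). unfold R_dist in *.
  rewrite clf_zero, Rminus_0_r in * by exact Hf.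
  destruct Hf as [_ [Hscal _]]. rewrite Hscal, Rabs_mult.
  pose proof (Ha n). pose proof (Rabs_pos (a n)). pose proof (Rabs_pos (f (u n))). nra.
Qed.

End WeakCompactness.

Section MaximumLength.
Variable X : NormedSpace.
Implicit Types x y : X.

Lemma max_length_intro (E : X -> Prop) e :
  E e -> (forall e', E e' -> ns_norm e' <= ns_norm e) -> has_max_length X E.
Proof.
  intros He Hmax. exists e. split; [exact He|split].
  - intros r [e' [He' ->]]. now apply Hmax.
  - intros b Hb. apply Hb. eauto.
Qed.

Lemma remotal_zero_max_length (K : X -> Prop) : remotal X ns_zero K -> has_max_length X K.
Proof.
  intros [e0 [He0 [Hub _]]]. apply (max_length_intro K e0 He0).
  intros e He. rewrite <- (norm_zero_sub X e), <- (norm_zero_sub X e0).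
  apply Hub. eauto.
Qed.

Theorem hull_no_max_length (E : X -> Prop) :
  weakly_compact X E -> ~ has_max_length X E ->
  ~ has_max_length X (closed_convex_hull X E).
Proof.
  intros Hwc Hno [x [Hx [Hub _]]].
  destruct (norming_functional X x) as [f [Hf [Hb Hfx]]].
  assert (Hreach : exists e, E e /\ ns_norm x <= f e).
  { apply NNPP. intros Hn.
    destruct (weakly_compact_gap X E f (ns_norm x) Hwc Hf) as [d [Hd Hgap]].
    - intros e He. apply Rnot_le_lt. intros H. apply Hn. eauto.
    - pose proof (Hx _ (halfspace_convex X f _ Hf) (halfspace_closed X f _ Hf Hb) Hgap).
      simpl in *. lra. }
  destruct Hreach as [e [He Hfe]].
  apply Hno, (max_length_intro E e He). intros e' He'.
  assert (ns_norm e' <= ns_norm x) by (apply Hub; exists e'; split; [now apply hull_incl|reflexivity]).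
  pose proof (Rle_abs (f e)). pose proof (Hb e). lra.
Qed.

Lemma increasing_range_no_max (u : nat -> X) l :
  (forall n, (n >= 1)%nat -> ns_norm (u n) < ns_norm (u (S n))) ->
  ns_norm l < ns_norm (u 1%nat) ->
  ~ has_max_length X (fun y => (exists n, (n >= 1)%nat /\ y = u n) \/ y = l).
Proof.
  intros Hinc Hl [e [He [Hub _]]].
  assert (Hin : forall n, (n >= 1)%nat -> ns_norm (u n) <= ns_norm e)
    by (intros n Hn; apply Hub; exists (u n); split; [left; eauto|reflexivity]).
  destruct He as [[n [Hn ->]]| ->].
  - pose proof (Hinc n Hn). pose proof (Hin (S n) ltac:(lia)). lra.
  - pose proof (Hin 1%nat (le_n 1)). lra.
Qed.

End MaximumLength.

Lemma coef_bounds n : 0 <= INR n / (INR n + 1) < 1.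
Proof.
  pose proof (pos_INR n). split.
  - apply Rle_mult_inv_pos; lra.
  - apply Rmult_lt_reg_r with (INR n + 1); [lra|].
    unfold Rdiv. rewrite Rmult_assoc, Rinv_l by lra. lra.
Qed.

Lemma coef_increasing n : INR n / (INR n + 1) < INR (S n) / (INR (S n) + 1).
Proof.
  rewrite S_INR. pose proof (pos_INR n).
  apply Rmult_lt_reg_r with ((INR n + 1) * (INR n + 1 + 1)); [nra|].
  replace (INR n / (INR n + 1) * ((INR n + 1) * (INR n + 1 + 1)))
    with (INR n * (INR n + 1 + 1)) by (field; lra).
  replace ((INR n + 1) / (INR n + 1 + 1) * ((INR n + 1) * (INR n + 1 + 1)))
    with ((INR n + 1) * (INR n + 1)) by (field; lra).
  nra.
Qed.

Theorem mainTheorem3 (X : NormedSpace) (HX : banach X) :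
  (forall E : X -> Prop,
      weakly_compact X E -> ~ has_max_length X E ->
      ~ has_max_length X (closed_convex_hull X E)) /\
  (forall x : nat -> X,
      ~ schur X ->
      (forall n, (n >= 1)%nat -> ns_norm (x n) = 1) ->
      weak_cv X x ns_zero ->
      let K := closed_convex_hull X
                 (fun y => (exists n, (n >= 1)%nat /\ y = ns_scal (INR n / (INR n + 1)) (x n))
                           \/ y = ns_zero) in
      norm_closed X K /\ ns_bounded X K /\ ns_convex X K /\ ~ remotal X ns_zero K).
Proof.
  split; [apply hull_no_max_length|].
  intros x _ Hunit Hw K.
  set (u := fun n => ns_scal (INR n / (INR n + 1)) (x n)).
  assert (Hnorm : forall n, (n >= 1)%nat -> ns_norm (u n) = INR n / (INR n + 1)).
  { intros n Hn. unfold u. rewrite ns_norm_scal, Hunit, Rabs_right by (auto; apply Rle_ge, coef_bounds).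
    ring. }
  split; [apply hull_closed|split; [|split; [apply hull_convex|]]].
  - exists 1. intros y Hy. apply Hy; [apply ball_convex|apply ball_closed|].
    intros e [[n [Hn ->]]| ->].
    + fold (u n). rewrite Hnorm by exact Hn. pose proof (coef_bounds n). lra.
    + rewrite norm_zero. lra.
  - intros Hrem. apply remotal_zero_max_length in Hrem. revert Hrem.
    apply hull_no_max_length.
    + apply weak_cv_range_compact, weak_cv_scale; [exact Hw|].
      intros n. pose proof (coef_bounds n). rewrite Rabs_right; lra.
    + apply (increasing_range_no_max X u).
      * intros n Hn. rewrite !Hnorm by lia. apply coef_increasing.
      * rewrite norm_zero, Hnorm by lia. simpl. lra.
Qed.
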